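(* Let $b$ be a Boolean expression, $C$ a HeyVL statement, $I$ an expectation, $\vec v$ a list of variables, and for an expectation $J$ let $\mathrm{Park}(b,C,J)$ be the HeyVL program $\mathtt{assert}\ J$ [labelled (1)]; $\mathtt{havoc}\ \vec v$; $\mathtt{validate}$; $\mathtt{assume}\ J$ [labelled (I)]; $\mathtt{if}\ b\ \{\ C;\ \mathtt{assert}\ J$ [labelled (2)]$;\ \mathtt{assume}\ ?(\mathsf{false})$ [labelled (II)] $\}\ \mathtt{else}\ \{\}$. Let $S=\mathrm{Park}(b,C,I)$, let $X,Y$ be expectations, and let $S'$ be obtained from $S$ by removing any subset of the assumptions (I) and (II), such that $\models\{X\}S'\{Y\}$. Then: (1) If $S'$ does not include (I), then $\models\{X\}\,\mathrm{Park}(b,C,\infty)\,\{Y\}$. (2) If $S'$ does not include (II), then $\models\{X\}\,\mathtt{if}\ b\ \{C\}\ \mathtt{else}\ \{\}\,\{Y\}$.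
   Context: Expectations are functions from program states to $[0,\infty]$, ordered pointwise by $\preceq$. $?(b)$ is the expectation equal to $\infty$ where $b$ holds and $0$ elsewhere. HeyVL statements and verification pre-expectation transformer $\mathrm{vp}$ (monotone in its argument): $x :\approx \sum_i p_i\cdot t_i$: $\sum_i p_i X[x/t_i]$; $\mathtt{reward}\ a$: $X+a$; $S_1;S_2$: $\mathrm{vp}[S_1](\mathrm{vp}[S_2](X))$; $\mathtt{if}(\sqcap)/\mathtt{if}(\sqcup)\{S_1\}\mathtt{else}\{S_2\}$: pointwise min/max of branch values; $\mathtt{assert}\ Y$: $\min(Y,X)$; $\mathtt{coassert}\ Y$: $\max(Y,X)$; $\mathtt{assume}\ Y$: $\infty$ where $Y\le X$, else $X$; $\mathtt{coassume}\ Y$: $0$ where $Y\ge X$, else $X$; $\mathtt{havoc}\ \vec v$/$\mathtt{cohavoc}\ \vec v$: pointwise inf/sup over values of $\vec v$; $\mathtt{validate}$: $\infty$ where $X=\infty$, else $0$; $\mathtt{covalidate}$: $0$ where $X=0$, else $\infty$. The conditional $\mathtt{if}\ b\{S_1\}\mathtt{else}\{S_2\}$ abbreviates $\mathtt{if}(\sqcap)\{\mathtt{assume}\ ?(b);S_1\}\mathtt{else}\{\mathtt{assume}\ ?(\neg b);S_2\}$. Removing a statement means replacing it by $\mathtt{skip}$, $\mathrm{vp}[\mathtt{skip}](X)=X$. Write $\models\{A\}S\{B\}$ iff $A\preceq\mathrm{vp}[S](B)$. *)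

From HB Require Import structures.
From mathcomp Require Import all_boot all_order all_algebra.
From mathcomp Require Import boolp classical_sets reals constructive_ereal ereal.
From Stdlib Require List.
Set Implicit Arguments. Unset Strict Implicit. Unset Printing Implicit Defensive.
Import Order.TTheory GRing.Theory Num.Theory.
Local Open Scope classical_set_scope.
Local Open Scope ring_scope.
Local Open Scope ereal_scope.

Section HeyVL.
Context (R : realType) (Var : eqType) (Val : Var -> Type).

Definition state := forall x : Var, Val x.
(* expectations: state -> [0, +oo]  (nonnegativity is imposed via [nonneg_exp]) *)
Definition exp := state -> \bar R.
Definition nonneg_exp (X : exp) := forall s, 0 <= X s.
Definition bexp := state -> bool.

(* ?(b) *)
Definition iver (b : bexp) : exp := fun s => if b s then +oo else 0.

Inductive stmt :=
| Skip
| PAsgn (x : Var) (l : seq ((state -> R) * (state -> Val x)))  (* x :~ sum_i p_i . t_i *)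
| Reward (a : exp)
| Seq (S1 S2 : stmt)
| IfDemon (S1 S2 : stmt)
| IfAngel (S1 S2 : stmt)
| Assert (Y : exp)
| Coassert (Y : exp)
| Assume (Y : exp)
| Coassume (Y : exp)
| Havoc (vs : seq Var)
| Cohavoc (vs : seq Var)
| Validate
| Covalidate.

Definition havoc_set (vs : seq Var) (s : state) : set state :=
  [set s' | forall y, y \notin vs -> s' y = s y].

Fixpoint vp (S : stmt) (X : exp) {struct S} : exp :=
  match S with
  | Skip => X
  | PAsgn x l => fun s =>
      \sum_(pt <- l) ((pt.1 s)%:E * X (@dfwith Var Val s x (pt.2 s)))
  | Reward a => fun s => X s + a s
  | Seq S1 S2 => vp S1 (vp S2 X)
  | IfDemon S1 S2 => fun s => Order.min (vp S1 X s) (vp S2 X s)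
  | IfAngel S1 S2 => fun s => Order.max (vp S1 X s) (vp S2 X s)
  | Assert Y => fun s => Order.min (Y s) (X s)
  | Coassert Y => fun s => Order.max (Y s) (X s)
  | Assume Y => fun s => if Y s <= X s then +oo else X s
  | Coassume Y => fun s => if X s <= Y s then 0 else X s
  | Havoc vs => fun s => ereal_inf [set X s' | s' in havoc_set vs s]
  | Cohavoc vs => fun s => ereal_sup [set X s' | s' in havoc_set vs s]
  | Validate => fun s => if X s == +oo then +oo else 0
  | Covalidate => fun s => if X s == 0 then 0 else +oo
  end.

Fixpoint wf (S : stmt) : Prop :=
  match S with
  | Skip | Havoc _ | Cohavoc _ | Validate | Covalidate => True
  | PAsgn x l => forall s, (forall pt, List.In pt l -> (0 <= pt.1 s)%R)
                           /\ (\sum_(pt <- l) pt.1 s)%R = 1%R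
  | Reward a | Assert a | Coassert a | Assume a | Coassume a => nonneg_exp a
  | Seq S1 S2 | IfDemon S1 S2 | IfAngel S1 S2 => wf S1 /\ wf S2
  end.

Definition valid (X : exp) (S : stmt) (Y : exp) := forall s, X s <= vp S Y s.

Definition If (b : bexp) (S1 S2 : stmt) : stmt :=
  IfDemon (Seq (Assume (iver b)) S1) (Seq (Assume (iver (fun s => ~~ b s))) S2).

(* Park(b,C,J) where assumption (I) is kept iff kI, (II) kept iff kII;
   a removed statement is replaced by skip. *)
Definition ParkOpt (kI kII : bool) (vs : seq Var) (b : bexp) (C : stmt) (J : exp) : stmt :=
  Seq (Assert J)                                   (* (1) *)
  (Seq (Havoc vs)
  (Seq Validate
  (Seq (if kI then Assume J else Skip)             (* (I) *)
       (If b (Seq C (Seq (Assert J)                (* (2) *)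
                         (if kII then Assume (iver (fun _ => false)) else Skip)))  (* (II) *)
             Skip)))).

Definition Park (vs : seq Var) (b : bexp) (C : stmt) (J : exp) : stmt :=
  ParkOpt true true vs b C J.

Definition infty_exp : exp := fun _ => +oo.

End HeyVL.

From HB Require Import structures.
From mathcomp Require Import all_boot all_order all_algebra.
From mathcomp Require Import boolp classical_sets reals constructive_ereal ereal.
Set Implicit Arguments. Unset Strict Implicit. Unset Printing Implicit Defensive.
Import Order.TTheory GRing.Theory Num.Theory.
Local Open Scope ereal_scope.

(** Both parts are refinement arguments, where [S ⊑ S'] means [vp S <= vp S']
on nonnegative post-expectations and [vp] is monotone.
(1) Without (I), [S'] refines [Park(b,C,oo)]: raising [I] to [oo] only raises
the assertions, the missing (I) is refined by [assume oo], and whatever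
follows (2) is refined by [assume ?(false)], whose vp is [oo].
(2) Without (II), let [0 < X s <= vp S' Y s].  The first assertion gives
[X s <= I s].  As [havoc; validate] only yields [0] or [oo], its continuation
has vp [oo] at [s]; through [assume I] (or trivially, if (I) is absent) this
gives [I s <= vp (if b {C; assert I} else {}) Y s], and dropping [assert I]
only raises the right-hand side. *)

Section Refinement.
Context (R : realType) (Var : eqType) (Val : Var -> Type).
Local Notation Skip := (@Skip R Var Val).
Local Notation Validate := (@Validate R Var Val).
Local Notation Havoc := (@Havoc R Var Val).
Implicit Types (S T : stmt R Val) (X J : exp R Val) (b : bexp Val).

Lemma iver_ge0 b : nonneg_exp (iver R b).
Proof. by move=> s; rewrite /iver; case: ifP. Qed.

Lemma infty_exp_ge0 : nonneg_exp (@infty_exp R Var Val).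
Proof. by move=> s; exact: leey. Qed.

Lemma wf_If b S T : wf S -> wf T -> wf (If b S T).
Proof. by move=> wS wT; do !split => //; exact: iver_ge0. Qed.

Lemma vp_ge0 S X : wf S -> nonneg_exp X -> nonneg_exp (vp S X).
Proof.
elim: S X => [|x l|a|S1 IH1 S2 IH2|S1 IH1 S2 IH2|S1 IH1 S2 IH2|Y|Y|Y|Y|vs|vs||]
  X /= wS X0 s; try by case: ifP.
- exact: X0.
- have {wS} : forall pt, List.In pt l -> (0 <= pt.1 s)%R by case: (wS s).
  elim: l => [|pt l IHl] l0; first by rewrite big_nil.
  rewrite big_cons adde_ge0 ?IHl //; last by move=> pt' h; apply: l0; right.
  by rewrite mule_ge0 // lee_fin l0 //; left.
- exact: adde_ge0.
- by case: wS => w1 w2; apply: IH1 => //; exact: IH2.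
- by case: wS => w1 w2; rewrite le_min IH1 ?IH2.
- by case: wS => w1 w2; rewrite le_max IH1.
- by rewrite le_min wS X0.
- by rewrite le_max X0 orbT.
- by apply/ereal_infP => _ [s' _ <-].
- by apply: le_ereal_sup_tmp; exists (X s) => //; exists s.
Qed.

Lemma vp_Assume_le J X X' s : X s <= X' s ->
  vp (Assume J) X s <= vp (Assume J) X' s.
Proof.
move=> XX' /=; case: ifP => h1; case: ifP => h2 //; last exact: leey.
by move: h2; rewrite (le_trans h1 XX').
Qed.

Lemma vp_mono S X X' : wf S -> nonneg_exp X -> (forall s, X s <= X' s) ->
  forall s, vp S X s <= vp S X' s.
Proof.
elim: S X X' =>
  [|x l|a|S1 IH1 S2 IH2|S1 IH1 S2 IH2|S1 IH1 S2 IH2|Y|Y|Y|Y|vs|vs||]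
  X X' /= wS X0 XX' s.
- exact: XX'.
- have {wS} : forall pt, List.In pt l -> (0 <= pt.1 s)%R by case: (wS s).
  elim: l => [|pt l IHl] l0; first by rewrite !big_nil.
  rewrite !big_cons leeD ?IHl //; last by move=> pt' h; apply: l0; right.
  by rewrite lee_wpmul2l // lee_fin l0 //; left.
- exact: leeD.
- case: wS => w1 w2; apply: IH1 => //; first exact: vp_ge0.
  exact: IH2.
- by case: wS => w1 w2; rewrite le_min !ge_min (IH1 X X') // (IH2 X X') ?orbT.
- by case: wS => w1 w2; rewrite ge_max !le_max (IH1 X X') // (IH2 X X') ?orbT.
- by rewrite le_min !ge_min lexx XX' !orbT.
- by rewrite ge_max !le_max lexx XX' !orbT.
- exact: (@vp_Assume_le Y X X').
- case: ifP => h1; case: ifP => h2 //.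
  + exact: le_trans (X0 s) (XX' s).
  + by move: h1; rewrite (le_trans (XX' s) h2).
- apply/ereal_infP => _ [s' hs' <-]; apply: ge_ereal_inf.
  by exists (X s'); [exists s' | exact: XX'].
- apply/ereal_supP => _ [s' hs' <-]; apply: le_ereal_sup_tmp.
  by exists (X' s'); [exists s' | exact: XX'].
- case: ifP => /eqP h1; case: ifP => /eqP h2 //.
  by move: (XX' s); rewrite h1 leye_eq => /eqP.
- case: ifP => /eqP h1; case: ifP => /eqP h2 //.
  by case: h1; apply/eqP; rewrite eq_le X0 andbT -h2 XX'.
Qed.

Definition refines S S' :=
  forall X, nonneg_exp X -> forall s, vp S X s <= vp S' X s.

Lemma refines_refl S : refines S S.
Proof. by move=> X _ s. Qed.

Lemma refines_seq S1 S1' S2 S2' : wf S1' -> wf S2 ->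
  refines S1 S1' -> refines S2 S2' -> refines (Seq S1 S2) (Seq S1' S2').
Proof.
move=> w1' w2 r1 r2 X X0 s /=.
apply: le_trans (r1 _ (vp_ge0 w2 X0) s) _.
by apply: vp_mono => //; [exact: vp_ge0 | exact: r2].
Qed.

Lemma refines_If b S S' T : refines S S' -> refines (If b S T) (If b S' T).
Proof.
move=> r X X0 s /=; have /= Sle := vp_Assume_le (iver R b) (r X X0 s).
by rewrite le_min !ge_min Sle lexx orbT.
Qed.

Lemma refines_Assert J J' : (forall s, J s <= J' s) ->
  refines (Assert J) (Assert J').
Proof. by move=> JJ' X _ s /=; rewrite le_min !ge_min JJ' lexx orbT. Qed.

Lemma refines_Seq_Assert J S : refines (Seq (Assert J) S) S.
Proof. by move=> X _ s /=; rewrite ge_min lexx orbT. Qed.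

Lemma refines_Skip_Assume J : refines Skip (Assume J).
Proof. by move=> X _ s /=; case: ifP => // _; exact: leey. Qed.

Lemma refines_Assume_false S : refines S (Assume (iver R (fun=> false))).
Proof. by move=> X X0 s /=; rewrite /iver X0 leey. Qed.

Lemma valid_refines X S S' Y :
  nonneg_exp Y -> refines S S' -> valid X S Y -> valid X S' Y.
Proof. by move=> Y0 r v s; exact: le_trans (v s) (r Y Y0 s). Qed.

Lemma vp_havoc_validate_gt0 vs S X s :
  0 < vp (Seq (Havoc vs) (Seq Validate S)) X s -> vp S X s = +oo.
Proof.
rewrite /=; set inf := ereal_inf _ => inf_gt0.
have : inf <= if vp S X s == +oo then +oo else 0.
  by apply: ge_ereal_inf; eexists; first exists s.
by case: eqP => // _ /(lt_le_trans inf_gt0); rewrite ltxx.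
Qed.

Lemma vp_Seq_Assert J S X s :
  vp (Seq (Assert J) S) X s = Order.min (J s) (vp S X s).
Proof. by []. Qed.

Lemma vp_Assume_eq_infty J X s : vp (Assume J) X s = +oo -> J s <= X s.
Proof. by rewrite /=; case: ifP => // JX Xs; rewrite Xs leey in JX. Qed.

Lemma refines_ParkOpt_noI kII vs b C J : wf C -> nonneg_exp J ->
  refines (ParkOpt false kII vs b C J) (Park vs b C (@infty_exp R Var Val)).
Proof.
move=> wC J0.
have wII : wf (if kII then Assume (iver R (fun=> false)) else Skip).
  by case: kII => //; exact: iver_ge0.
have wBody : wf (If b (Seq C (Seq (Assert J) (if kII
  then Assume (iver R (fun=> false)) else Skip))) Skip) by exact: wf_If.
have Jle : forall s, J s <= infty_exp R s by move=> s; exact: leey.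
apply: refines_seq (refines_Assert Jle) _; [exact: infty_exp_ge0 | done |].
apply: refines_seq (refines_refl _) _ => //.
apply: refines_seq (refines_refl _) _ => //.
apply: refines_seq (refines_Skip_Assume _) _; [exact: infty_exp_ge0 | done |].
apply: refines_If; apply: refines_seq (refines_refl _) _ => //.
apply: refines_seq (refines_Assert Jle) (refines_Assume_false _) => //.
exact: infty_exp_ge0.
Qed.

Lemma le_vp_If_ParkOpt_noII kI vs b C J Y x s :
  wf C -> nonneg_exp J -> nonneg_exp Y -> 0 < x ->
  x <= vp (ParkOpt kI false vs b C J) Y s -> x <= vp (If b C Skip) Y s.
Proof.
move=> wC J0 Y0 x_gt0; rewrite vp_Seq_Assert le_min => /andP[xJ xHV].
have drop_assert : refines (Seq C (Seq (Assert J) Skip)) (Seq C Skip).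
  exact: refines_seq (refines_refl C) (refines_Seq_Assert _ _).
rewrite -[vp (If b C Skip) Y s]/(vp (If b (Seq C Skip) Skip) Y s).
apply: le_trans xJ (le_trans _ (refines_If b Skip drop_assert Y0 s)).
move: (vp_havoc_validate_gt0 (lt_le_trans x_gt0 xHV)).
case: kI {xHV} => [|/= ->]; last exact: leey.
exact: vp_Assume_eq_infty.
Qed.

End Refinement.

Theorem theorem7 (R : realType) (Var : eqType) (Val : Var -> Type)
  (b : bexp Val) (C : stmt R Val) (I : exp R Val) (vs : seq Var)
  (X Y : exp R Val) (kI kII : bool) :
  wf C -> nonneg_exp I -> nonneg_exp X -> nonneg_exp Y ->
  valid X (ParkOpt kI kII vs b C I) Y ->
  (~~ kI -> valid X (Park vs b C (@infty_exp R Var Val)) Y) /\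
  (~~ kII -> valid X (If b C (@Skip R Var Val)) Y).
Proof.
move=> wC I0 X0 Y0 vS; split => [/negbTE kI0 | /negbTE kII0].
  rewrite kI0 in vS; apply: valid_refines vS => //.
  exact: refines_ParkOpt_noI.
rewrite kII0 in vS => s.
have [->|Xs_neq0] := eqVneq (X s) 0.
  by apply: vp_ge0 Y0 s; exact: wf_If.
have Xs_gt0 : 0 < X s by rewrite lt_def Xs_neq0 X0.
exact: le_vp_If_ParkOpt_noII Xs_gt0 (vS s).
Qed.
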